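(* Let $\mathbb{K}\in\{\mathbb{R},\mathbb{C}\}$, $B$ a commutative Banach algebra over $\mathbb{K}$, $(\omega_k)_{k\in\mathbb{N}}$ a convex growth family and $((\mathcal{H},\Sigma),(\omega_k)_k)$ a control pair. Consider the locally convex algebra $(\ell^\infty_{\rightarrow}(\mathcal{H},B),\star)$ and its commutator Lie algebra with $[\varphi,\psi]=\varphi\star\psi-\psi\star\varphi$. (1) The set $G_{\mathrm{ctr}}(\mathcal{H},B)$ of controlled characters is a closed subgroup of the unit group of $(\ell^\infty_{\rightarrow}(\mathcal{H},B),\star)$; inversion in this group is $\phi\mapsto\phi\circ S$ and the unit element is $x\mapsto\epsilon(x)1_B$. (2) The set $\mathfrak{g}_{\mathrm{ctr}}(\mathcal{H},B)$ of controlled infinitesimal characters is a closed Lie subalgebra of $(\ell^\infty_{\rightarrow}(\mathcal{H},B),[\cdot,\cdot])$.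
   Context: A growth family is a family $(\omega_k)_{k\in\mathbb{N}}$ of functions $\omega_k\colon\mathbb{N}_0\to\mathbb{N}$ with (W1) $\omega_k(0)=1$, $\omega_k(n)\le\omega_{k+1}(n)$; (W2) $\omega_k(n)\omega_k(m)\le\omega_k(n+m)$; (W3) for every $k_1$ there is $k_2\ge k_1$ with $\omega_{k_2}(n)\ge2^n\omega_{k_1}(n)$ for all $n$; convex means: for each $k_1$ one can choose such $k_2$ so that additionally for every $k_3\ge k_2$ some $\alpha\in]0,1[$ satisfies $\omega_{k_1}(n)^\alpha\omega_{k_3}(n)^{1-\alpha}\le\omega_{k_2}(n)$ for all $n$. For a set $J$ graded by $|\cdot|\colon J\to\mathbb{N}_0$: $\ell^1_{\leftarrow}(J)=\bigcap_k\{\sum c_\tau\tau:\sum|c_\tau|\omega_k(|\tau|)<\infty\}$ (projective limit topology); $\ell^\infty_{\rightarrow}(J,B)=\bigcup_k\{f\colon J\to B:\sup_\tau\|f(\tau)\|/\omega_k(|\tau|)<\infty\}$ (locally convex direct limit of these Banach spaces). A commutative Banach algebra: unital commutative, complete submultiplicative norm, $\|1_B\|=1$. A combinatorial Hopf algebra $(\mathcal{H},\Sigma)$: graded connected Hopf algebra over $\mathbb{K}$ (multiplication $m$, coproduct $\Delta$, counit $\epsilon$, antipode $S$) with $\Sigma\subseteq\mathcal{H}$ such that $\mathcal{H}$ is as an algebra, via a fixed isomorphism, $\mathbb{K}[\Sigma]$ or $\mathbb{K}\langle\Sigma\rangle$. With $M$ the free commutative monoid resp. free monoid on $\Sigma$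 (degree-additive grading), $\mathcal{H}=\mathbb{K}^{(M)}$, $\mathcal{H}\otimes\mathcal{H}=\mathbb{K}^{(M\times M)}$ with $|(\mu,\sigma)|=|\mu|+|\sigma|$. Control pair: $\Delta$ and $S$ extend to continuous linear maps $\ell^1_{\leftarrow}(M)\to\ell^1_{\leftarrow}(M\times M)$ resp. $\ell^1_{\leftarrow}(M)\to\ell^1_{\leftarrow}(M)$. A linear $\phi\colon\mathcal{H}\to B$ is controlled if $\phi|_M\in\ell^\infty_{\rightarrow}(M,B)$; $\ell^\infty_{\rightarrow}(\mathcal{H},B)$ denotes these maps, topologised as $\ell^\infty_{\rightarrow}(M,B)$. Convolution: $\phi\star\psi=m_B\circ(\phi\otimes\psi)\circ\Delta$. A character is a unital algebra homomorphism $\mathcal{H}\to B$; an infinitesimal character is a linear $\phi$ with $\phi(ab)=\phi(a)\epsilon(b)+\epsilon(a)\phi(b)$. Controlled (infinitesimal) characters are those that are controlled linear maps. *)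

From HB Require Import structures.
From mathcomp Require Import all_boot all_order all_algebra.
From mathcomp Require Import all_classical all_reals all_analysis.
From mathcomp Require Import finmap multiset complex.

Set Implicit Arguments.
Unset Strict Implicit.
Unset Printing Implicit Defensive.

Import Order.TTheory GRing.Theory Num.Theory.
Local Open Scope ring_scope.
Local Open Scope classical_set_scope.

(* Concrete free monoids M on a generating set Sig, with the degree-additive  *)
(* grading induced by deg : Sig -> nat.                                       *)
(*   noncommutative case: words  (seq Sig, cat, [::])                         *)
(*   commutative case   : finite multisets ({mset Sig}, msetD, mset0)          *)
Definition wdeg (Sig : choiceType) (deg : Sig -> nat) (w : seq Sig) : nat :=
  (\sum_(s <- w) deg s)%N.

Definition msdeg (Sig : choiceType) (deg : Sig -> nat) (A : {mset Sig}%mset) : nat :=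
  (\sum_(s <- finsupp A) A s * deg s)%N.

Definition cabs (R : realType) (z : R[i]) : R := @ComplexField.Normc.normc R z.

Section Defs.
Variables (R : realType) (K : fieldType) (absK : K -> R).

(* Finitely supported functions X -> K (elements of K^(X)) are represented by  *)
(* formal finite linear combinations, i.e. lists of (basis element, coeff).   *)
Definition coef (X : eqType) (l : seq (X * K)) (x : X) : K :=
  \sum_(t <- l | t.1 == x) t.2.

Definition fc_eq (X : eqType) (l1 l2 : seq (X * K)) : Prop :=
  forall x, coef l1 x = coef l2 x.

Definition kdelta (X : eqType) (x : X) : X -> K := fun y => if y == x then 1 else 0.

Variables (M : choiceType) (mmul : M -> M -> M) (mone : M) (msz : M -> nat).

(* Product in H = K^(M) (monoid algebra) and in H (x) H = K^(M x M). *)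
Definition hmul (h1 h2 : seq (M * K)) : seq (M * K) :=
  [seq (mmul a.1 b.1, a.2 * b.2) | a <- h1, b <- h2].

Definition tmul (h1 h2 : seq ((M * M) * K)) : seq ((M * M) * K) :=
  [seq ((mmul a.1.1 b.1.1, mmul a.1.2 b.1.2), a.2 * b.2) | a <- h1, b <- h2].

(* Hopf algebra structure on H = K^(M): coproduct D, counit eps, antipode S,  *)
(* each given on the basis M and extended linearly.                           *)
Section Hopf.
Variables (D : M -> seq ((M * M) * K)) (eps : M -> K) (S : M -> seq (M * K)).

Definition graded_connected_hopf : Prop :=
  [/\ (* Delta is an algebra morphism H -> H (x) H *)
      ((forall a b, fc_eq (D (mmul a b)) (tmul (D a) (D b))) /\
      fc_eq (D mone) [:: ((mone, mone), 1)]),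
      (* coassociativity: (Delta (x) id) Delta = (id (x) Delta) Delta *)
      (forall mu, fc_eq
         (flatten [seq [seq ((u.1.1, u.1.2, t.1.2), u.2 * t.2) | u <- D t.1.1]
                  | t <- D mu])
         (flatten [seq [seq ((t.1.1, v.1.1, v.1.2), t.2 * v.2) | v <- D t.1.2]
                  | t <- D mu])),
      (* counit: eps is an algebra morphism H -> K, and
         (eps (x) id) Delta = id = (id (x) eps) Delta *)
      ((forall a b, eps (mmul a b) = eps a * eps b) /\ eps mone = 1) /\
      (forall mu, fc_eq [seq (t.1.2, eps t.1.1 * t.2) | t <- D mu] [:: (mu, 1)]
               /\ fc_eq [seq (t.1.1, eps t.1.2 * t.2) | t <- D mu] [:: (mu, 1)]),
      (* antipode: m (S (x) id) Delta = 1 eps = m (id (x) S) Delta *)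
      (forall mu,
          fc_eq (flatten [seq hmul [seq (s.1, t.2 * s.2) | s <- S t.1.1] [:: (t.1.2, 1)]
                         | t <- D mu]) [:: (mone, eps mu)]
       /\ fc_eq (flatten [seq hmul [:: (t.1.1, t.2)] (S t.1.2) | t <- D mu])
                [:: (mone, eps mu)]) &
      (* grading (the product is graded since msz is degree-additive):
         Delta and eps are graded, and H is connected (H_0 = K 1) *)
      [/\ forall mu x y, coef (D mu) (x, y) != 0 -> (msz x + msz y)%N = msz mu,
          forall mu, msz mu != 0%N -> eps mu = 0 &
          forall mu, msz mu = 0%N -> mu = mone]].
End Hopf.

Definition growth_family (omega : nat -> nat -> nat) : Prop :=
  [/\ forall k n, (0 < omega k n)%N,
      forall k, omega k 0%N = 1%N,
      forall k n, (omega k n <= omega k.+1 n)%N,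
      forall k n m, (omega k n * omega k m <= omega k (n + m))%N &
      forall k1, exists k2, (k1 <= k2)%N /\
        forall n, (2 ^ n * omega k1 n <= omega k2 n)%N].

Definition convex_growth_family (omega : nat -> nat -> nat) : Prop :=
  growth_family omega /\
  forall k1, exists k2, [/\ (k1 <= k2)%N,
    (forall n, (2 ^ n * omega k1 n <= omega k2 n)%N) &
    forall k3, (k2 <= k3)%N -> exists alpha : R, 0 < alpha < 1 /\
      forall n, ((omega k1 n)%:R `^ alpha) * ((omega k3 n)%:R `^ (1 - alpha))
                <= (omega k2 n)%:R :> R].

Section L1.
Variable omega : nat -> nat -> nat.

Definition l1_sum (J : choiceType) (g : J -> nat) (k : nat) (c : J -> K) : \bar R :=
  \esum_(t in [set: J]) ((absK (c t) * (omega k (g t))%:R)%:E).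

Definition l1 (J : choiceType) (g : J -> nat) : set (J -> K) :=
  [set c | forall k, (l1_sum g k c < +oo)%E].

Definition l1_norm (J : choiceType) (g : J -> nat) (k : nat) (c : J -> K) : R :=
  fine (l1_sum g k c).

(* increasing in k, so single seminorm balls form a neighbourhood base).     *)
Definition l1_cont_linear (J1 J2 : choiceType) (g1 : J1 -> nat) (g2 : J2 -> nat)
    (T : (J1 -> K) -> (J2 -> K)) : Prop :=
  [/\ forall c, l1 g1 c -> l1 g2 (T c),
      forall a c d, l1 g1 c -> l1 g1 d ->
        T (fun t => a * c t + d t) = (fun t => a * T c t + T d t) &
      forall c0, l1 g1 c0 -> forall k (e : R), 0 < e ->
        exists k' (d : R), 0 < d /\
          forall c, l1 g1 c -> l1_norm g1 k' (fun t => c t - c0 t) < d ->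
            l1_norm g2 k (fun t => T c t - T c0 t) < e].

Definition pair_deg (p : M * M) : nat := (msz p.1 + msz p.2)%N.

(* ((H, Sigma), omega) is a control pair: Delta and S extend to continuous   *)
(* linear maps on the ell^1 completions.                                     *)
Definition control_pair (D : M -> seq ((M * M) * K)) (S : M -> seq (M * K)) : Prop :=
  (exists T : (M -> K) -> (M * M -> K),
      l1_cont_linear msz pair_deg T /\ forall mu, T (kdelta mu) = coef (D mu))
  /\ (exists T : (M -> K) -> (M -> K),
      l1_cont_linear msz msz T /\ forall mu, T (kdelta mu) = coef (S mu)).
End L1.

Definition banach_algebra_norm (B : comAlgType K) (nB : B -> R) : Prop :=
  [/\ ((forall x, 0 <= nB x) /\ (forall x, nB x = 0 -> x = 0)),
      forall x y, nB (x + y) <= nB x + nB y,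
      forall (a : K) x, nB (a *: x) = absK a * nB x,
      ((forall x y, nB (x * y) <= nB x * nB y) /\ nB 1 = 1) &
      forall u : nat -> B,
        (forall e : R, 0 < e -> exists N, forall n m, (N <= n)%N -> (N <= m)%N ->
           nB (u n - u m) < e) ->
        exists l, forall e : R, 0 < e -> exists N, forall n, (N <= n)%N ->
           nB (u n - l) < e].

(* A linear map H -> B is identified with its restriction phi : M -> B.      *)
Section Linf.
Variables (B : comAlgType K) (nB : B -> R) (omega : nat -> nat -> nat).

Definition kball (k : nat) (r : R) (phi : M -> B) : Prop :=
  forall mu, nB (phi mu) <= r * (omega k (msz mu))%:R.

(* ell^infty_->(H, B) = union of the Banach spaces E_k *)
Definition linf : set (M -> B) := [set phi | exists k r, kball k r phi].

Definition absconvex (W : set (M -> B)) : Prop :=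
  forall (a b : K) x y, absK a + absK b <= 1 -> W x -> W y ->
    W (fun mu => a *: x mu + b *: y mu).

(* basic 0-neighbourhoods of the locally convex direct limit topology:       *)
(* absolutely convex sets whose trace on every E_k is a 0-neighbourhood of E_k *)
Definition linf_zero_nbhd (W : set (M -> B)) : Prop :=
  [/\ W `<=` linf, absconvex W &
      forall k, exists r : R, 0 < r /\ forall psi, kball k r psi -> W psi].

Definition linf_open (O : set (M -> B)) : Prop :=
  O `<=` linf /\
  forall phi, O phi -> exists W, linf_zero_nbhd W /\
    forall psi, W psi -> O (fun mu => phi mu + psi mu).

Definition linf_closed (C : set (M -> B)) : Prop :=
  C `<=` linf /\ linf_open (linf `\` C).

Variables (D : M -> seq ((M * M) * K)) (eps : M -> K) (S : M -> seq (M * K)).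

Definition linext (phi : M -> B) (h : seq (M * K)) : B := \sum_(t <- h) t.2 *: phi t.1.
Definition epsext (h : seq (M * K)) : K := \sum_(t <- h) t.2 * eps t.1.

Definition conv (phi psi : M -> B) : M -> B :=
  fun mu => \sum_(t <- D mu) t.2 *: (phi t.1.1 * psi t.1.2).

Definition cunit : M -> B := fun mu => eps mu *: 1.

Definition compS (phi : M -> B) : M -> B := fun mu => linext phi (S mu).

Definition is_character (phi : M -> B) : Prop :=
  linext phi [:: (mone, 1)] = 1 /\
  forall h1 h2, linext phi (hmul h1 h2) = linext phi h1 * linext phi h2.

Definition is_inf_character (phi : M -> B) : Prop :=
  forall h1 h2, linext phi (hmul h1 h2) =
                epsext h2 *: linext phi h1 + epsext h1 *: linext phi h2.

Definition Gctr : set (M -> B) := [set phi | linf phi /\ is_character phi].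
Definition gctr : set (M -> B) := [set phi | linf phi /\ is_inf_character phi].

Definition linf_units : set (M -> B) :=
  [set phi | linf phi /\ exists psi, linf psi /\ conv phi psi = cunit /\ conv psi phi = cunit].

Definition lemma3p10_conclusion : Prop :=
  [/\ (forall phi, linf phi -> conv cunit phi = phi /\ conv phi cunit = phi) /\
      Gctr cunit,
      Gctr `<=` linf_units,
      (forall phi psi, Gctr phi -> Gctr psi -> Gctr (conv phi psi)),
      (forall phi, Gctr phi ->
         [/\ Gctr (compS phi), conv phi (compS phi) = cunit & conv (compS phi) phi = cunit]) &
      (* closed in the unit group (subspace topology) *)
      exists F, linf_closed F /\ Gctr = F `&` linf_units]
  /\
  [/\ gctr (fun _ => 0),
      (forall (a : K) phi psi, gctr phi -> gctr psi -> gctr (fun mu => a *: phi mu + psi mu)),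
      (forall phi psi, gctr phi -> gctr psi -> gctr (fun mu => conv phi psi mu - conv psi phi mu)) &
      linf_closed gctr].
End Linf.

Definition lemma3p10_stmt : Prop :=
  forall (B : comAlgType K) (nB : B -> R) (omega : nat -> nat -> nat)
         (D : M -> seq ((M * M) * K)) (eps : M -> K) (S : M -> seq (M * K)),
    banach_algebra_norm nB ->
    convex_growth_family omega ->
    graded_connected_hopf D eps S ->
    control_pair omega D S ->
    lemma3p10_conclusion nB omega D eps S.
End Defs.

(* Characters are closed under convolution because Delta is an algebra morphism
   and B is commutative, and the antipode identities say exactly that phi o S
   is a two-sided convolution inverse of a character phi.  Moreover phi o S is
   again a character: in the convolution algebra of H (x) H, associative by
   coassociativity, both (a, b) |-> (phi o S)(a b) and
   (a, b) |-> (phi o S)(a) (phi o S)(b) are inverses of phi (x) phi.  Expanding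
   Delta (a b) with the counit shows that the commutator of two infinitesimal
   characters is again one.
   On the analytic side, continuity of the extensions of Delta and S at 0,
   tested on rescaled basis vectors, gives l^1 bounds for Delta mu and S mu in
   terms of omega_k'(|mu|); with submultiplicativity of omega_k and of the norm
   of B these keep convolution and composition with S inside l^oo.  Finally,
   failing to be an (infinitesimal) character is witnessed by finitely many
   values, and perturbations that are small at these points form a
   0-neighbourhood of the direct limit, so both sets are closed. *)
From Pilot Require Import Defs.
From HB Require Import structures.
From mathcomp Require Import all_boot all_order all_algebra.
From mathcomp Require Import all_classical all_reals all_analysis.
From mathcomp Require Import finmap multiset complex.
From mathcomp Require Import ring lra.
Import Order.TTheory GRing.Theory Num.Theory.
Local Open Scope ring_scope.

Set Implicit Arguments.
Unset Strict Implicit.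
Unset Printing Implicit Defensive.

Section FormalSums.
Variable K : fieldType.

Definition lsum (V : lmodType K) (X : Type) (f : X -> V) (l : seq (X * K)) : V :=
  \sum_(t <- l) t.2 *: f t.1.

Lemma lsum1 (V : lmodType K) (X : Type) (f : X -> V) x c :
  lsum f [:: (x, c)] = c *: f x.
Proof. by rewrite /lsum big_seq1. Qed.

Lemma lsum_flatten (V : lmodType K) (X : Type) (f : X -> V) (ll : seq (seq (X * K))) :
  lsum f (flatten ll) = \sum_(l <- ll) lsum f l.
Proof. exact: big_flatten. Qed.

Lemma lsum_map (V : lmodType K) (X Y : Type) (f : X -> V) (g : Y -> X * K) l :
  lsum f (map g l) = \sum_(t <- l) (g t).2 *: f (g t).1.
Proof. exact: big_map. Qed.

Lemma lsum_allpairs (V : lmodType K) (X Y Z : Type) (f : X -> V)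
    (g : Y -> Z -> X * K) l1 l2 :
  lsum f [seq g a b | a <- l1, b <- l2] =
  \sum_(a <- l1) \sum_(b <- l2) (g a b).2 *: f (g a b).1.
Proof. exact: big_allpairs_dep. Qed.

Lemma lsum_coef (V : lmodType K) (X : eqType) (f : X -> V) (l : seq (X * K)) (s : seq X) :
  uniq s -> {subset map fst l <= s} ->
  lsum f l = \sum_(x <- s) coef l x *: f x.
Proof.
move=> s_uniq; elim: l => [|t l IHl] l_s.
  by rewrite /lsum big_nil big1 // => x _; rewrite /coef big_nil scale0r.
have coef_cons x : coef (t :: l) x = (if t.1 == x then t.2 else 0) + coef l x.
  by rewrite /coef big_cons; case: ifP; rewrite ?add0r.
rewrite /lsum big_cons -/(lsum _ _) IHl; last by move=> y yl; apply: l_s; rewrite inE yl orbT.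
under [in RHS]eq_bigr => x _ do rewrite coef_cons scalerDl.
have t_s : t.1 \in s := l_s _ (mem_head _ _).
rewrite big_split /=; congr (_ + _).
rewrite (bigD1_seq t.1) //= eqxx big1 ?addr0 // => x /negbTE xt.
by rewrite eq_sym xt scale0r.
Qed.

Lemma eq_lsum_fc (V : lmodType K) (X : eqType) (f : X -> V) (l1 l2 : seq (X * K)) :
  fc_eq l1 l2 -> lsum f l1 = lsum f l2.
Proof.
move=> l12; set s := undup (map fst (l1 ++ l2)).
have s_uniq : uniq s := undup_uniq _.
rewrite (@lsum_coef _ _ f l1 s) ?(@lsum_coef _ _ f l2 s) //.
- by apply: eq_bigr => x _; rewrite l12.
- by move=> y yl; rewrite mem_undup map_cat mem_cat yl orbT.
- by move=> y yl; rewrite mem_undup map_cat mem_cat yl.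
Qed.

End FormalSums.

Section Characters.
Variables (K : fieldType) (M : choiceType) (mmul : M -> M -> M) (mone : M).
Variables (B : comAlgType K) (eps : M -> K).

Lemma lsum_allpairs_mul (X : Type) (op : X -> X -> X) (F : X -> B) l1 l2 :
  {morph F : x y / op x y >-> x * y} ->
  lsum F [seq (op a.1 b.1, a.2 * b.2) | a <- l1, b <- l2] = lsum F l1 * lsum F l2.
Proof.
move=> F_op; rewrite lsum_allpairs /lsum mulr_suml; apply: eq_bigr => a _.
rewrite mulr_sumr; apply: eq_bigr => b _ /=.
by rewrite F_op -scalerA -scalerAl -scalerAr.
Qed.

Lemma is_characterP (phi : M -> B) :
  is_character mmul mone phi <-> phi mone = 1 /\ {morph phi : x y / mmul x y >-> x * y}.
Proof.
rewrite /is_character /linext big_seq1 scale1r.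
split=> -[phi1 phi_mul]; split=> // x y.
  by have := phi_mul [:: (x, 1)] [:: (y, 1)]; rewrite /hmul /= !big_seq1 mulr1 !scale1r.
exact: lsum_allpairs_mul.
Qed.

Lemma is_inf_characterP (phi : M -> B) :
  is_inf_character mmul eps phi <->
  forall x y, phi (mmul x y) = eps y *: phi x + eps x *: phi y.
Proof.
rewrite /is_inf_character /linext /epsext.
split=> [phi_der x y | phi_der l1 l2].
  have := phi_der [:: (x, 1)] [:: (y, 1)].
  by rewrite /hmul /= !big_seq1 mulr1 !scale1r !mul1r.
rewrite /hmul big_allpairs_dep.
under eq_bigr => a _ do under eq_bigr => b _ do rewrite /= phi_der scalerDr !scalerA.
under eq_bigr => a _ do rewrite big_split /=.
rewrite big_split /=; congr (_ + _).
  rewrite exchange_big /= scaler_suml; apply: eq_bigr => b _.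
  rewrite scaler_sumr; apply: eq_bigr => a _.
  by rewrite scalerA; congr (_ *: _); ring.
rewrite scaler_suml; apply: eq_bigr => a _.
rewrite scaler_sumr; apply: eq_bigr => b _.
by rewrite scalerA; congr (_ *: _); ring.
Qed.

Lemma is_inf_character_scale_add a (phi psi : M -> B) :
  is_inf_character mmul eps phi -> is_inf_character mmul eps psi ->
  is_inf_character mmul eps (fun mu => a *: phi mu + psi mu).
Proof.
move=> /is_inf_characterP phi_der /is_inf_characterP psi_der.
apply/is_inf_characterP => x y; rewrite phi_der psi_der !scalerDr !scalerA.
by rewrite (mulrC a (eps y)) (mulrC a (eps x)); ring.
Qed.

End Characters.

Section Convolution.
Variables (K : fieldType) (M : choiceType) (mmul : M -> M -> M) (mone : M).
Variables (B : comAlgType K) (D : M -> seq ((M * M) * K)) (eps : M -> K).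
Variable S : M -> seq (M * K).

Definition coprod3l mu : seq (M * M * M * K) :=
  flatten [seq [seq ((u.1.1, u.1.2, t.1.2), u.2 * t.2) | u <- D t.1.1] | t <- D mu].
Definition coprod3r mu : seq (M * M * M * K) :=
  flatten [seq [seq ((t.1.1, v.1.1, v.1.2), t.2 * v.2) | v <- D t.1.2] | t <- D mu].

Hypothesis D_mul : forall a b, fc_eq (D (mmul a b)) (tmul mmul (D a) (D b)).
Hypothesis D_one : fc_eq (D mone) [:: ((mone, mone), 1)].
Hypothesis D_coassoc : forall mu, fc_eq (coprod3l mu) (coprod3r mu).
Hypothesis eps_mul : forall a b, eps (mmul a b) = eps a * eps b.
Hypothesis eps_one : eps mone = 1.
Hypothesis D_counit : forall mu,
  fc_eq [seq (t.1.2, eps t.1.1 * t.2) | t <- D mu] [:: (mu, 1)]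
  /\ fc_eq [seq (t.1.1, eps t.1.2 * t.2) | t <- D mu] [:: (mu, 1)].
Hypothesis S_antipode : forall mu,
  fc_eq (flatten [seq hmul mmul [seq (s.1, t.2 * s.2) | s <- S t.1.1] [:: (t.1.2, 1)]
                 | t <- D mu]) [:: (mone, eps mu)]
  /\ fc_eq (flatten [seq hmul mmul [:: (t.1.1, t.2)] (S t.1.2) | t <- D mu])
           [:: (mone, eps mu)].

Local Notation conv := (Defs.conv D).
Local Notation cunit := (cunit B eps).

Lemma counit_suml (V : lmodType K) (f : M -> V) mu :
  \sum_(t <- D mu) t.2 *: (eps t.1.1 *: f t.1.2) = f mu.
Proof.
have := eq_lsum_fc f (D_counit mu).1; rewrite lsum1 scale1r lsum_map => <-.
by apply: eq_bigr => t _ /=; rewrite scalerA mulrC.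
Qed.

Lemma counit_sumr (V : lmodType K) (f : M -> V) mu :
  \sum_(t <- D mu) t.2 *: (eps t.1.2 *: f t.1.1) = f mu.
Proof.
have := eq_lsum_fc f (D_counit mu).2; rewrite lsum1 scale1r lsum_map => <-.
by apply: eq_bigr => t _ /=; rewrite scalerA mulrC.
Qed.

Lemma conv_cunitl (phi : M -> B) : conv cunit phi = phi.
Proof.
apply: funext => mu; rewrite -[RHS](counit_suml phi mu).
by apply: eq_bigr => t _; rewrite -scalerAl mul1r.
Qed.

Lemma conv_cunitr (phi : M -> B) : conv phi cunit = phi.
Proof.
apply: funext => mu; rewrite -[RHS](counit_sumr phi mu).
by apply: eq_bigr => t _; rewrite -scalerAr mulr1.
Qed.

Lemma conv_lsum (phi psi : M -> B) mu :
  conv phi psi mu = lsum (fun p => phi p.1 * psi p.2) (D mu).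
Proof. by []. Qed.

Lemma conv_one (phi psi : M -> B) : conv phi psi mone = phi mone * psi mone.
Proof. by rewrite conv_lsum (eq_lsum_fc _ D_one) lsum1 scale1r. Qed.

Lemma cunit_char : is_character mmul mone cunit.
Proof.
apply/is_characterP; split=> [|x y]; first by rewrite /cunit eps_one scale1r.
by rewrite /cunit eps_mul -scalerAl -scalerAr mul1r scalerA.
Qed.

Lemma conv_char (phi psi : M -> B) :
  is_character mmul mone phi -> is_character mmul mone psi ->
  is_character mmul mone (conv phi psi).
Proof.
move=> /is_characterP[phi1 phiM] /is_characterP[psi1 psiM].
apply/is_characterP; split=> [|x y]; first by rewrite conv_one phi1 psi1 mulr1.
rewrite conv_lsum (eq_lsum_fc _ (D_mul x y)).
apply: (@lsum_allpairs_mul _ _ _ (fun p q => (mmul p.1 q.1, mmul p.2 q.2))).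
by move=> p q /=; rewrite phiM psiM; ring.
Qed.

Lemma conv_compSr (phi : M -> B) : is_character mmul mone phi ->
  conv phi (compS S phi) = cunit.
Proof.
move=> /is_characterP[phi1 phiM]; apply: funext => mu.
have := eq_lsum_fc phi (S_antipode mu).2.
rewrite lsum1 phi1 lsum_flatten big_map /Defs.cunit => <-.
rewrite conv_lsum; apply: eq_bigr => t _.
by rewrite /hmul lsum_allpairs_mul // lsum1 -scalerAl.
Qed.

Lemma conv_compSl (phi : M -> B) : is_character mmul mone phi ->
  conv (compS S phi) phi = cunit.
Proof.
move=> /is_characterP[phi1 phiM]; apply: funext => mu.
have := eq_lsum_fc phi (S_antipode mu).1.
rewrite lsum1 phi1 lsum_flatten big_map /Defs.cunit => <-.
rewrite conv_lsum; apply: eq_bigr => t _.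
rewrite /hmul lsum_allpairs_mul // lsum1 scale1r scalerAl; congr (_ * _).
by rewrite lsum_map /compS /linext scaler_sumr; apply: eq_bigr => s _; rewrite scalerA.
Qed.

(* Convolution in Hom(H (x) H, B) for maps given on the basis M x M; the
   coproduct of H (x) H is (id (x) tw (x) id) o (Delta (x) Delta). *)
Definition tconv (F G : M -> M -> B) a b : B :=
  \sum_(s <- D a) \sum_(u <- D b) (s.2 * u.2) *: (F s.1.1 u.1.1 * G s.1.2 u.1.2).

Definition tunit a b : B := (eps a * eps b) *: 1.

Lemma conv_mmul (phi psi : M -> B) a b :
  conv phi psi (mmul a b) =
  tconv (fun x y => phi (mmul x y)) (fun x y => psi (mmul x y)) a b.
Proof. by rewrite conv_lsum (eq_lsum_fc _ (D_mul a b)) lsum_allpairs. Qed.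

Lemma tconv_tensor (f g f' g' : M -> B) a b :
  tconv (fun x y => f x * g y) (fun x y => f' x * g' y) a b = conv f f' a * conv g g' b.
Proof.
rewrite /tconv /Defs.conv mulr_suml; apply: eq_bigr => s _.
rewrite mulr_sumr; apply: eq_bigr => u _.
by rewrite -scalerAl -scalerAr !scalerA; congr (_ *: _); ring.
Qed.

Lemma scalerMM (a b : K) (x y : B) : (a *: x) * (b *: y) = (a * b) *: (x * y).
Proof. by rewrite -scalerAl -scalerAr scalerA. Qed.

Definition tensor3 (F G H : M -> M -> B) (ta tb : M * M * M) : B :=
  F ta.1.1 tb.1.1 * G ta.1.2 tb.1.2 * H ta.2 tb.2.

Lemma tconv_convl F G H a b :
  tconv (tconv F G) H a b = lsum (fun ta => lsum (tensor3 F G H ta) (coprod3l b)) (coprod3l a).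
Proof.
have lsum3 (V : lmodType K) (g : M * M * M -> V) mu : lsum g (coprod3l mu) =
    \sum_(t <- D mu) \sum_(u <- D t.1.1) (u.2 * t.2) *: g (u.1.1, u.1.2, t.1.2).
  by rewrite lsum_flatten big_map; apply: eq_bigr => t _; rewrite lsum_map.
rewrite lsum3 /tconv; apply: eq_bigr => t _.
under [RHS]eq_bigr => u _ do rewrite lsum3 scaler_sumr.
rewrite exchange_big /=; apply: eq_bigr => t' _.
rewrite mulr_suml scaler_sumr; apply: eq_bigr => u _.
rewrite mulr_suml scaler_sumr scaler_sumr; apply: eq_bigr => u' _.
by rewrite /tensor3 /= -!scalerAl !scalerA; congr (_ *: _); ring.
Qed.

Lemma tconv_convr F G H a b :
  tconv F (tconv G H) a b = lsum (fun ta => lsum (tensor3 F G H ta) (coprod3r b)) (coprod3r a).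
Proof.
have lsum3 (V : lmodType K) (g : M * M * M -> V) mu : lsum g (coprod3r mu) =
    \sum_(t <- D mu) \sum_(v <- D t.1.2) (t.2 * v.2) *: g (t.1.1, v.1.1, v.1.2).
  by rewrite lsum_flatten big_map; apply: eq_bigr => t _; rewrite lsum_map.
rewrite lsum3 /tconv; apply: eq_bigr => t _.
under [RHS]eq_bigr => u _ do rewrite lsum3 scaler_sumr.
rewrite exchange_big /=; apply: eq_bigr => t' _.
rewrite mulr_sumr scaler_sumr; apply: eq_bigr => u _.
rewrite mulr_sumr scaler_sumr scaler_sumr; apply: eq_bigr => u' _.
by rewrite /tensor3 /= -!scalerAr !scalerA mulrA; congr (_ *: _); ring.
Qed.

Lemma tconvA F G H : tconv (tconv F G) H = tconv F (tconv G H).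
Proof.
apply: funext => a; apply: funext => b.
rewrite tconv_convl tconv_convr (eq_lsum_fc _ (D_coassoc a)); congr lsum.
by apply: funext => ta; apply: eq_lsum_fc.
Qed.

Lemma tconv_unitl G : tconv tunit G = G.
Proof.
apply: funext => a; apply: funext => b.
rewrite -[RHS](counit_suml (fun x => G x b) a); apply: eq_bigr => s _.
rewrite -(counit_suml (G s.1.2) b) !scaler_sumr; apply: eq_bigr => u _.
by rewrite /tunit -scalerAl mul1r !scalerA; congr (_ *: _); ring.
Qed.

Lemma tconv_unitr G : tconv G tunit = G.
Proof.
apply: funext => a; apply: funext => b.
rewrite -[RHS](counit_sumr (fun x => G x b) a); apply: eq_bigr => s _.
rewrite -(counit_sumr (G s.1.1) b) !scaler_sumr; apply: eq_bigr => u _.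
by rewrite /tunit -scalerAr mulr1 !scalerA; congr (_ *: _); ring.
Qed.

Lemma compS_char (phi : M -> B) : is_character mmul mone phi ->
  is_character mmul mone (compS S phi).
Proof.
move=> phi_char; have /is_characterP[phi1 phiM] := phi_char.
set psi := compS S phi.
have inv_r := conv_compSr phi_char; have inv_l := conv_compSl phi_char.
apply/is_characterP; split.
  have := f_equal (fun f => f mone) inv_r.
  by rewrite conv_one phi1 mul1r /Defs.cunit eps_one scale1r.
have inv_mul : tconv (fun a b => phi a * phi b) (fun a b => psi (mmul a b)) = tunit.
  apply: funext => a; apply: funext => b.
  have := f_equal (fun f => f (mmul a b)) inv_r.
  rewrite conv_mmul /Defs.cunit eps_mul /tunit => <-.
  by apply: eq_bigr => s _; apply: eq_bigr => u _; rewrite phiM.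
have inv_tensor : tconv (fun a b => psi a * psi b) (fun a b => phi a * phi b) = tunit.
  apply: funext => a; apply: funext => b.
  by rewrite tconv_tensor inv_l /tunit /Defs.cunit scalerMM mulr1.
move=> x y; have := f_equal (fun F => F x y) (tconv_unitl (fun a b => psi (mmul a b))).
by rewrite -inv_tensor tconvA inv_mul tconv_unitr => <-.
Qed.

Lemma conv_mmul_inf (phi psi : M -> B) a b :
  is_inf_character mmul eps phi -> is_inf_character mmul eps psi ->
  conv phi psi (mmul a b) =
    eps b *: conv phi psi a + phi a * psi b + psi a * phi b + eps a *: conv phi psi b.
Proof.
move=> /is_inf_characterP phi_der /is_inf_characterP psi_der.
have eps_b : \sum_(u <- D b) u.2 * (eps u.1.1 * eps u.1.2) = eps b
  := counit_suml (V := K^o) eps b.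
have eps_a : \sum_(s <- D a) s.2 * (eps s.1.1 * eps s.1.2) = eps a
  := counit_suml (V := K^o) eps a.
have term1 : eps b *: conv phi psi a = \sum_(s <- D a) \sum_(u <- D b)
    (s.2 * u.2 * (eps u.1.1 * eps u.1.2)) *: (phi s.1.1 * psi s.1.2).
  rewrite -eps_b /Defs.conv scaler_suml.
  under eq_bigr => u _ do rewrite scaler_sumr.
  rewrite exchange_big; apply: eq_bigr => s _; apply: eq_bigr => u _.
  by rewrite scalerA; congr (_ *: _); ring.
have term2 : phi a * psi b = \sum_(s <- D a) \sum_(u <- D b)
    (s.2 * u.2 * (eps u.1.1 * eps s.1.2)) *: (phi s.1.1 * psi u.1.2).
  rewrite -(counit_sumr phi a) -(counit_suml psi b) mulr_suml.
  apply: eq_bigr => s _; rewrite mulr_sumr; apply: eq_bigr => u _.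
  by rewrite !scalerMM scalerA; congr (_ *: _); ring.
have term3 : psi a * phi b = \sum_(s <- D a) \sum_(u <- D b)
    (s.2 * u.2 * (eps s.1.1 * eps u.1.2)) *: (phi u.1.1 * psi s.1.2).
  rewrite -(counit_suml psi a) -(counit_sumr phi b) mulr_suml.
  apply: eq_bigr => s _; rewrite mulr_sumr; apply: eq_bigr => u _.
  by rewrite !scalerMM scalerA [phi _ * _]mulrC; congr (_ *: _); ring.
have term4 : eps a *: conv phi psi b = \sum_(s <- D a) \sum_(u <- D b)
    (s.2 * u.2 * (eps s.1.1 * eps s.1.2)) *: (phi u.1.1 * psi u.1.2).
  rewrite -eps_a /Defs.conv scaler_suml; apply: eq_bigr => s _.
  rewrite scaler_sumr; apply: eq_bigr => u _.
  by rewrite scalerA; congr (_ *: _); ring.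
rewrite conv_mmul term1 term2 term3 term4 -!big_split; apply: eq_bigr => s _.
rewrite -!big_split; apply: eq_bigr => u _ /=.
rewrite phi_der psi_der mulrDl !mulrDr !scalerMM !scalerDr !scalerA !addrA.
by congr (_ + _ + _ + _); congr (_ *: _); ring.
Qed.

Lemma conv_commutator_inf (phi psi : M -> B) :
  is_inf_character mmul eps phi -> is_inf_character mmul eps psi ->
  is_inf_character mmul eps (fun mu => conv phi psi mu - conv psi phi mu).
Proof.
move=> phi_inf psi_inf; apply/is_inf_characterP => x y.
by rewrite !conv_mmul_inf // !scalerBr; ring.
Qed.

End Convolution.

Local Open Scope classical_set_scope.

Section L1Bounds.
Variables (R : realType) (K : fieldType) (absK : K -> R).
Hypothesis absK0 : absK 0 = 0.
Hypothesis absK_ge0 : forall x, 0 <= absK x.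
Variables (omega : nat -> nat -> nat) (J : choiceType) (g : J -> nat).

Lemma l1_sum_ge0 k (c : J -> K) : (0 <= l1_sum absK omega g k c)%E.
Proof. by apply: esum_ge0 => x _; rewrite lee_fin mulr_ge0. Qed.

Lemma l1_sum_ge_seq k (c : J -> K) (s : seq J) : uniq s ->
  ((\sum_(x <- s) absK (c x) * (omega k (g x))%:R)%:E <= l1_sum absK omega g k c)%E.
Proof.
move=> s_uniq; apply: esum_ge; exists [set` s]; first by split; [exact: finite_seq|].
by rewrite -sumEFin fsbig_seq.
Qed.

Lemma l1_norm_ge_seq k (c : J -> K) (s : seq J) :
  uniq s -> l1 absK omega g c ->
  \sum_(x <- s) absK (c x) * (omega k (g x))%:R <= l1_norm absK omega g k c.
Proof.
move=> s_uniq c_l1; rewrite /l1_norm -lee_fin fineK ?l1_sum_ge_seq //.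
by rewrite ge0_fin_numE ?l1_sum_ge0 ?c_l1.
Qed.

Lemma l1_sum_supp1 k (c : J -> K) (mu : J) : (forall t, t != mu -> c t = 0) ->
  l1_sum absK omega g k c = (absK (c mu) * (omega k (g mu))%:R)%:E.
Proof.
move=> c_supp; rewrite /l1_sum.
transitivity (\esum_(t in [set: J])
    (if t \in [set mu] then (absK (c t) * (omega k (g t))%:R)%:E else 0%E)).
  apply: eq_esum => t _; case: ifPn => // t_mu.
  have /c_supp -> : t != mu by apply: contraNneq t_mu => ->; exact: mem_set.
  by rewrite absK0 mul0r.
by rewrite -esum_mkcond esum_set1 // lee_fin mulr_ge0.
Qed.

Lemma l1_supp1 (c : J -> K) (mu : J) : (forall t, t != mu -> c t = 0) ->
  l1 absK omega g c.
Proof. by move=> c_supp k; rewrite (l1_sum_supp1 _ c_supp) ltry. Qed.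

Lemma l1_norm_supp1 k (c : J -> K) (mu : J) : (forall t, t != mu -> c t = 0) ->
  l1_norm absK omega g k c = absK (c mu) * (omega k (g mu))%:R.
Proof. by move=> c_supp; rewrite /l1_norm (l1_sum_supp1 _ c_supp). Qed.

Lemma l1_0 : l1 absK omega g (fun _ => 0).
Proof. by move=> k; rewrite /l1_sum esum1 ?ltry // => t _; rewrite absK0 mul0r. Qed.

End L1Bounds.

Section ContinuousLinear.
Variables (R : realType) (K : fieldType) (absK : K -> R).
Hypothesis absK0 : absK 0 = 0.
Hypothesis absK_ge0 : forall x, 0 <= absK x.
Hypothesis absKM : {morph absK : x y / x * y}.
Variable emb : R -> K.
Hypothesis absK_emb : forall r, 0 <= r -> absK (emb r) = r.
Variable omega : nat -> nat -> nat.
Hypothesis omega_gt0 : forall k n, (0 < omega k n)%N.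
Variables (J1 J2 : choiceType) (g1 : J1 -> nat) (g2 : J2 -> nat).
Variable T : (J1 -> K) -> (J2 -> K).
Hypothesis T_cont : l1_cont_linear absK omega g1 g2 T.

Lemma l1_cont_linear0 : T (fun _ => 0) = (fun _ => 0).
Proof.
case: T_cont => _ T_lin _; have l1_0 := l1_0 absK0 omega g1.
have := T_lin 1 _ _ l1_0 l1_0; under eq_fun do rewrite mulr0 addr0.
move=> T0; apply: funext => t; have /= := f_equal (fun f => f t) T0.
by rewrite mul1r -{1}[T _ t]addr0 => /addrI <-.
Qed.

Definition l1_basis_bounded (c : J1 -> J2 -> K) : Prop :=
  forall k, exists k' (C : R), 0 < C /\ forall mu (s : seq J2), uniq s ->
    \sum_(x <- s) absK (c mu x) * (omega k (g2 x))%:R <= C * (omega k' (g1 mu))%:R.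

Lemma l1_cont_linear_basis_bound (c : J1 -> J2 -> K) :
  (forall mu, T (kdelta K mu) = c mu) -> l1_basis_bounded c.
Proof.
move=> T_basis k; case: (T_cont) => T_l1 T_lin T_at.
have l1_0 := l1_0 absK0 omega g1.
have [k' [d [d_gt0 T_ball]]] := T_at _ l1_0 k 1 ltr01.
exists k', (2 / d); split=> [|mu s s_uniq]; first by rewrite divr_gt0.
set w : R := (omega k' (g1 mu))%:R; have w_gt0 : 0 < w by rewrite ltr0n.
set y := d / (2 * w); have y_gt0 : 0 < y by rewrite divr_gt0 // mulr_gt0.
have absy : absK (emb y) = y by rewrite absK_emb // ltW.
set v := fun t => emb y * kdelta K mu t + 0.
have v_supp t : t != mu -> v t = 0 by rewrite /v /kdelta => /negbTE ->; rewrite mulr0 addr0.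
have delta_supp t : t != mu -> kdelta K mu t = 0 by rewrite /kdelta => /negbTE ->.
have Tv : T v = fun t => emb y * c mu t.
  rewrite /v (T_lin _ _ _ (l1_supp1 absK0 absK_ge0 omega g1 delta_supp) l1_0).
  by rewrite T_basis l1_cont_linear0; under eq_fun do rewrite addr0.
have v_l1 := l1_supp1 absK0 absK_ge0 omega g1 v_supp.
have v_norm : l1_norm absK omega g1 k' (fun t => v t - 0) < d.
  have v0_supp t : t != mu -> v t - 0 = 0 by move/v_supp ->; rewrite subr0.
  rewrite (l1_norm_supp1 absK0 absK_ge0 omega g1 k' v0_supp) /v /kdelta eqxx.
  rewrite mulr1 addr0 subr0 absy -/w /y mulrAC -mulf_div divff ?gt_eqF // mulr1.
  by rewrite ltr_pdivrMr // ltr_pMr // ltr1n.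
have := T_ball v v_l1 v_norm; rewrite Tv l1_cont_linear0; under eq_fun do rewrite subr0.
move/(le_lt_trans (l1_norm_ge_seq absK_ge0 k s_uniq _)).
have -> : \sum_(x <- s) absK (emb y * c mu x) * (omega k (g2 x))%:R =
          y * \sum_(x <- s) absK (c mu x) * (omega k (g2 x))%:R.
  by rewrite mulr_sumr; apply: eq_bigr => x _; rewrite absKM absy mulrA.
have y_inv : y * (2 / d * w) = 1 by rewrite /y; field; rewrite ?gt_eqF.
have Tv_l1 : l1 absK omega g2 (fun t => emb y * c mu t) by rewrite -Tv; exact: T_l1.
by move=> /(_ Tv_l1) bound; rewrite ltW // -(ltr_pM2l y_gt0) y_inv.
Qed.

End ContinuousLinear.

Section ControlledMaps.
Variables (R : realType) (K : fieldType) (absK : K -> R).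
Hypothesis absK0 : absK 0 = 0.
Hypothesis absK_ge0 : forall x, 0 <= absK x.
Hypothesis absK1 : absK 1 = 1.
Hypothesis absKN1 : absK (-1) = 1.
Variables (M : choiceType) (msz : M -> nat) (B : comAlgType K) (nB : B -> R).
Variable omega : nat -> nat -> nat.
Hypothesis nB_banach : banach_algebra_norm absK nB.
Hypothesis omega_growth : growth_family omega.

Lemma nB_ge0 x : 0 <= nB x.
Proof. by case: nB_banach => [[]]. Qed.

Lemma ler_nBD x y : nB (x + y) <= nB x + nB y.
Proof. by case: nB_banach. Qed.

Lemma nBZ a x : nB (a *: x) = absK a * nB x.
Proof. by case: nB_banach. Qed.

Lemma ler_nBM x y : nB (x * y) <= nB x * nB y.
Proof. by case: nB_banach => _ _ _ []. Qed.

Lemma nB1 : nB 1 = 1.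
Proof. by case: nB_banach => _ _ _ []. Qed.

Lemma nB0 : nB 0 = 0.
Proof. by rewrite -(scale0r (0 : B)) nBZ absK0 mul0r. Qed.

Lemma nBN x : nB (- x) = nB x.
Proof. by rewrite -scaleN1r nBZ absKN1 mul1r. Qed.

Lemma nB_gt0 x : x != 0 -> 0 < nB x.
Proof.
move=> x_neq0; rewrite lt_def nB_ge0 andbT; apply: contra x_neq0 => /eqP.
by case: nB_banach => [[_ nB_eq0]] _ _ _ _ /nB_eq0 ->.
Qed.

Lemma ler_nB_sum (I : Type) (r : seq I) (F : I -> B) :
  nB (\sum_(i <- r) F i) <= \sum_(i <- r) nB (F i).
Proof.
elim: r => [|i r IHr]; first by rewrite !big_nil nB0.
by rewrite !big_cons (le_trans (ler_nBD _ _)) // lerD2l.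
Qed.

Lemma ler_nB_lsum (X : choiceType) (f : X -> B) (l : seq (X * K)) :
  nB (lsum f l) <= \sum_(x <- undup (map fst l)) absK (coef l x) * nB (f x).
Proof.
rewrite (@lsum_coef _ _ _ f l (undup (map fst l))) ?undup_uniq //; last first.
  by move=> y; rewrite mem_undup.
by apply: (le_trans (ler_nB_sum _ _)); apply: ler_sum => x _; rewrite nBZ.
Qed.

Lemma nB_perturb_neq u v p q : nB p + nB q < nB (u - v) -> u + p != v + q.
Proof.
move=> small; apply/eqP => upvq.
suff : nB (u - v) <= nB p + nB q by rewrite leNgt small.
have -> : u - v = q - p by rewrite -[u](addrK p) upvq; ring.
by rewrite addrC (le_trans (ler_nBD _ _)) // nBN.
Qed.

Lemma nB_mul_perturb a b p q (d : R) : d <= 1 -> nB p <= d -> nB q <= d ->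
  nB ((a + p) * (b + q) - a * b) <= d * (nB a + nB b + 1).
Proof.
move=> d_le1 p_le q_le; have d_ge0 : 0 <= d := le_trans (nB_ge0 _) p_le.
have -> : (a + p) * (b + q) - a * b = a * q + p * b + p * q by ring.
have bound x y : nB x <= d -> nB (y * x) <= nB y * d.
  by move=> x_le; apply: le_trans (ler_nBM _ _) _; rewrite ler_wpM2l ?nB_ge0.
apply: le_trans (ler_nBD _ _) _; apply: le_trans (lerD (ler_nBD _ _) (lexx _)) _.
have := bound _ a q_le; have := bound _ b p_le; have := bound _ p q_le.
rewrite [p * b]mulrC; have := nB_ge0 a; have := nB_ge0 b; have := nB_ge0 p; nra.
Qed.

Lemma omega_gt0 k n : (0 < omega k n)%N.
Proof. by case: omega_growth. Qed.

Lemma omegaR_gt0 k n : 0 < (omega k n)%:R :> R.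
Proof. by rewrite ltr0n omega_gt0. Qed.

Lemma leq_omega k k' n : (k <= k')%N -> (omega k n <= omega k' n)%N.
Proof.
case: omega_growth => _ _ omega_S _ _; elim: k' => [|k' IHk'].
  by rewrite leqn0 => /eqP ->.
by rewrite leq_eqVlt ltnS => /predU1P[-> // | /IHk' le_k]; exact: leq_trans le_k _.
Qed.

Lemma leq_omega_mul k n m : (omega k n * omega k m <= omega k (n + m))%N.
Proof. by case: omega_growth. Qed.

Local Notation kball := (kball msz nB omega).
Local Notation linf := (linf msz nB omega).

Lemma kball_ge0 k r phi (mu : M) : kball k r phi -> 0 <= r.
Proof. by move=> /(_ mu) /(le_trans (nB_ge0 _)); rewrite pmulr_lge0 // omegaR_gt0. Qed.

Lemma kball_widen k k' r r' phi : (k <= k')%N -> r <= r' -> kball k r phi -> kball k' r' phi.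
Proof.
move=> le_k le_r phi_ball mu; have r_ge0 := kball_ge0 mu phi_ball.
apply: le_trans (phi_ball mu) _; apply: ler_pM => //.
by rewrite ler_nat leq_omega.
Qed.

Lemma linf_lincomb a b x y : linf x -> linf y -> linf (fun mu => a *: x mu + b *: y mu).
Proof.
move=> [k1 [r1 x_ball]] [k2 [r2 y_ball]].
exists (maxn k1 k2), (absK a * `|r1| + absK b * `|r2|) => mu.
have := kball_widen (leq_maxl k1 k2) (ler_norm r1) x_ball mu.
have := kball_widen (leq_maxr k1 k2) (ler_norm r2) y_ball mu.
move=> y_le x_le; apply: (le_trans (ler_nBD _ _)); rewrite !nBZ mulrDl -!mulrA.
by apply: lerD; apply: ler_wpM2l.
Qed.

Lemma linfD x y : linf x -> linf y -> linf (fun mu => x mu + y mu).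
Proof. by move=> x_linf /(linf_lincomb 1 1 x_linf); under eq_fun do rewrite !scale1r. Qed.

Lemma linf_scale_add a x y : linf x -> linf y -> linf (fun mu => a *: x mu + y mu).
Proof. by move=> x_linf /(linf_lincomb a 1 x_linf); under eq_fun do rewrite scale1r. Qed.

Lemma linfB x y : linf x -> linf y -> linf (fun mu => x mu - y mu).
Proof.
by move=> x_linf /(linf_lincomb 1 (-1) x_linf); under eq_fun do rewrite scale1r scaleN1r.
Qed.

Lemma linf0 : linf (fun _ => 0).
Proof. by exists 0%N, 0 => mu; rewrite nB0 mul0r. Qed.

Lemma linf_closed_pointwise (C : set (M -> B)) : C `<=` linf ->
  (forall phi, linf phi -> ~ C phi -> exists (mus : seq M) (d : R), 0 < d /\
     forall psi, linf psi -> (forall mu, mu \in mus -> nB (psi mu) <= d) ->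
       ~ C (fun mu => phi mu + psi mu)) ->
  linf_closed absK msz nB omega C.
Proof.
move=> C_linf C_pert; split=> //; split=> [phi [] //|phi [phi_linf phi_nC]].
have [mus [d [d_gt0 d_pert]]] := C_pert phi phi_linf phi_nC.
exists (fun psi => linf psi /\ forall mu, mu \in mus -> nB (psi mu) <= d); split; last first.
  by move=> psi [psi_linf psi_small]; split; [exact: linfD | exact: d_pert].
split=> [psi [] // | a b x y ab_le1 [x_linf x_small] [y_linf y_small] | k].
  split=> [|mu mu_in]; first exact: linf_lincomb.
  apply: le_trans (ler_nBD _ _) _; rewrite !nBZ.
  have := x_small mu mu_in; have := y_small mu mu_in; have := absK_ge0 a.
  have := absK_ge0 b; have := nB_ge0 (x mu); have := nB_ge0 (y mu); nra.
set W := (\max_(m <- mus) omega k (msz m)).+1.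
have W_gt0 : 0 < W%:R :> R by rewrite ltr0n.
exists (d / W%:R); split=> [|psi psi_ball]; first by rewrite divr_gt0.
split=> [|mu mu_in]; first by exists k, (d / W%:R).
apply: le_trans (psi_ball mu) _; rewrite mulrAC ler_pdivrMr // ler_pM2l // ler_nat.
by apply/leqW/(leq_bigmax_seq (F := fun m => omega k (msz m)) _ mu_in).
Qed.

Lemma linf_conv (D : M -> seq ((M * M) * K)) (phi psi : M -> B) :
  l1_basis_bounded absK omega msz (pair_deg msz) (fun mu => coef (D mu)) ->
  linf phi -> linf psi -> linf (Defs.conv D phi psi).
Proof.
move=> D_bd [k1 [r1 phi_ball]] [k2 [r2 psi_ball]].
set k := maxn k1 k2; have [k' [C [C_gt0 D_le]]] := D_bd k.
have {}phi_ball := kball_widen (leq_maxl k1 k2) (ler_norm r1) phi_ball.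
have {}psi_ball := kball_widen (leq_maxr k1 k2) (ler_norm r2) psi_ball.
exists k', (`|r1| * `|r2| * C) => mu; rewrite conv_lsum -[_ * C * _]mulrA.
apply: le_trans (ler_nB_lsum _ _) _.
apply: le_trans _ (ler_wpM2l _ (D_le mu _ (undup_uniq _))); last exact: mulr_ge0.
rewrite mulr_sumr; apply: ler_sum => p _; rewrite mulrCA; apply: ler_wpM2l => //.
apply: le_trans (ler_nBM _ _) _.
apply: le_trans (ler_pM (nB_ge0 _) (nB_ge0 _) (phi_ball p.1) (psi_ball p.2)) _.
rewrite mulrACA; apply: ler_wpM2l; first exact: mulr_ge0.
by rewrite -natrM ler_nat leq_omega_mul.
Qed.

Lemma linf_compS (S : M -> seq (M * K)) (phi : M -> B) :
  l1_basis_bounded absK omega msz msz (fun mu => coef (S mu)) ->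
  linf phi -> linf (compS S phi).
Proof.
move=> S_bd [k [r phi_ball]]; have [k' [C [C_gt0 S_le]]] := S_bd k.
have {}phi_ball := kball_widen (leqnn k) (ler_norm r) phi_ball.
exists k', (`|r| * C) => mu; rewrite -mulrA.
apply: le_trans (ler_nB_lsum _ _) _.
apply: le_trans _ (ler_wpM2l _ (S_le mu _ (undup_uniq _))) => //.
rewrite mulr_sumr; apply: ler_sum => p _.
by rewrite mulrCA; apply: ler_wpM2l.
Qed.

Lemma linf_cunit (mone : M) (eps : M -> K) :
  (forall mu, msz mu != 0%N -> eps mu = 0) -> (forall mu, msz mu = 0%N -> mu = mone) ->
  eps mone = 1 -> linf (cunit B eps).
Proof.
move=> eps_deg msz_conn eps_one; exists 0%N, 1 => mu.
rewrite /cunit nBZ nB1 mulr1 mul1r.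
have [/msz_conn ->|/eps_deg ->] := eqVneq (msz mu) 0%N.
  by rewrite eps_one absK1 ler1n omega_gt0.
by rewrite absK0 ler0n.
Qed.

End ControlledMaps.

Section ControlledCharacters.
Variables (R : realType) (K : fieldType) (absK : K -> R).
Hypothesis absK0 : absK 0 = 0.
Hypothesis absK_ge0 : forall x, 0 <= absK x.
Hypothesis absKN1 : absK (-1) = 1.
Variables (M : choiceType) (mmul : M -> M -> M) (mone : M) (msz : M -> nat).
Variables (B : comAlgType K) (nB : B -> R) (omega : nat -> nat -> nat).
Variable eps : M -> K.
Hypothesis nB_banach : banach_algebra_norm absK nB.
Hypothesis omega_growth : growth_family omega.

Local Notation linf := (linf msz nB omega).
Local Notation Gctr := (Gctr mmul mone msz nB omega).
Local Notation gctr := (gctr mmul msz nB omega eps).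

Lemma Gctr_closed : linf_closed absK msz nB omega Gctr.
Proof.
apply: linf_closed_pointwise => // [phi [] // | phi phi_linf phi_nchar].
have [phi1|phi1] := eqVneq (phi mone) 1; last first.
  set X := nB (phi mone - 1); have X_gt0 : 0 < X by rewrite (nB_gt0 nB_banach) ?subr_eq0.
  exists [:: mone], (X / 2); split=> [|psi _ psi_small [_ /is_characterP[/eqP pert1 _]]].
    by rewrite divr_gt0.
  move: pert1; rewrite -[1]addr0; apply/negP/(nB_perturb_neq absKN1 nB_banach).
  by have := psi_small _ (mem_head _ _); rewrite (nB0 absK0 nB_banach) -/X; lra.
have [[x [y phi_xy]]|phi_mul] :=
  pselect (exists x y, phi (mmul x y) != phi x * phi y); last first.
  case: phi_nchar; split=> //; apply/is_characterP; split=> // x y.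
  by apply: contrapT => ne; apply: phi_mul; exists x, y; apply/eqP.
set X := nB (phi (mmul x y) - phi x * phi y).
have X_gt0 : 0 < X by rewrite (nB_gt0 nB_banach) ?subr_eq0.
set Q := nB (phi x) + nB (phi y) + 2.
have Q_gt0 : 0 < Q.
  by rewrite /Q; have := nB_ge0 nB_banach (phi x); have := nB_ge0 nB_banach (phi y); lra.
set d := Num.min 1 (X / 2 / Q).
have d_le1 : d <= 1 by rewrite ge_min lexx.
have dQ : d * Q <= X / 2 by rewrite -ler_pdivlMr // ge_min lexx orbT.
exists [:: mmul x y; x; y], d; split=> [|psi _ psi_small [_ /is_characterP[_ pertM]]].
  by rewrite lt_min ltr01 !divr_gt0.
have psi_x : nB (psi x) <= d by apply: psi_small; rewrite !inE eqxx orbT.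
have psi_y : nB (psi y) <= d by apply: psi_small; rewrite !inE eqxx !orbT.
have psi_xy : nB (psi (mmul x y)) <= d by apply: psi_small; rewrite mem_head.
have /eqP : phi (mmul x y) + psi (mmul x y) =
    phi x * phi y + ((phi x + psi x) * (phi y + psi y) - phi x * phi y).
  by have /= -> := pertM x y; rewrite [RHS]addrC subrK.
apply/negP/(nB_perturb_neq absKN1 nB_banach).
have := nB_mul_perturb nB_banach (phi x) (phi y) d_le1 psi_x psi_y.
rewrite -/X /Q in dQ *; nra.
Qed.

Lemma gctr_closed : linf_closed absK msz nB omega gctr.
Proof.
apply: linf_closed_pointwise => // [phi [] // | phi phi_linf phi_ninf].
have [[x [y phi_xy]]|phi_der] := pselect
    (exists x y, phi (mmul x y) != eps y *: phi x + eps x *: phi y); last first.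
  case: phi_ninf; split=> //; apply/is_inf_characterP => x y.
  by apply: contrapT => ne; apply: phi_der; exists x, y; apply/eqP.
set X := nB (phi (mmul x y) - (eps y *: phi x + eps x *: phi y)).
have X_gt0 : 0 < X by rewrite (nB_gt0 nB_banach) ?subr_eq0.
set Q := 1 + absK (eps y) + absK (eps x).
have Q_gt0 : 0 < Q by rewrite /Q; have := absK_ge0 (eps x); have := absK_ge0 (eps y); lra.
set d := X / 2 / Q; have d_gt0 : 0 < d by rewrite !divr_gt0.
have dQ : d * Q = X / 2 by rewrite /d mulfVK ?gt_eqF.
exists [:: mmul x y; x; y], d; split=> // psi _ psi_small [_ /is_inf_characterP pertD].
have psi_x : nB (psi x) <= d by apply: psi_small; rewrite !inE eqxx orbT.
have psi_y : nB (psi y) <= d by apply: psi_small; rewrite !inE eqxx !orbT.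
have psi_xy : nB (psi (mmul x y)) <= d by apply: psi_small; rewrite mem_head.
have /eqP : phi (mmul x y) + psi (mmul x y) =
    (eps y *: phi x + eps x *: phi y) + (eps y *: psi x + eps x *: psi y).
  by have /= -> := pertD x y; rewrite !scalerDr addrACA.
apply/negP/(nB_perturb_neq absKN1 nB_banach).
have q_le : nB (eps y *: psi x + eps x *: psi y) <= absK (eps y) * d + absK (eps x) * d.
  apply: le_trans (ler_nBD nB_banach _ _) _; rewrite !(nBZ nB_banach).
  by apply: lerD; apply: ler_wpM2l.
rewrite -/X /Q in dQ *; have := absK_ge0 (eps x); have := absK_ge0 (eps y); nra.
Qed.

End ControlledCharacters.

Section Lemma3p10.
Variables (R : realType) (K : fieldType) (absK : K -> R).
Hypothesis absK0 : absK 0 = 0.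
Hypothesis absK_ge0 : forall x, 0 <= absK x.
Hypothesis absK1 : absK 1 = 1.
Hypothesis absKN1 : absK (-1) = 1.
Hypothesis absKM : {morph absK : x y / x * y}.
Variable emb : R -> K.
Hypothesis absK_emb : forall r, 0 <= r -> absK (emb r) = r.
Variables (M : choiceType) (mmul : M -> M -> M) (mone : M) (msz : M -> nat).
Variables (B : comAlgType K) (nB : B -> R) (omega : nat -> nat -> nat).
Variables (D : M -> seq ((M * M) * K)) (eps : M -> K) (S : M -> seq (M * K)).
Hypothesis nB_banach : banach_algebra_norm absK nB.
Hypothesis omega_growth : growth_family omega.
Hypothesis hopf : graded_connected_hopf mmul mone msz D eps S.
Hypothesis control : control_pair absK msz omega D S.

Local Notation linf := (linf msz nB omega).
Local Notation Gctr := (Gctr mmul mone msz nB omega).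
Local Notation gctr := (gctr mmul msz nB omega eps).
Local Notation conv := (Defs.conv D).
Local Notation cunit := (cunit B eps).

Lemma coprod_bounded :
  l1_basis_bounded absK omega msz (pair_deg msz) (fun mu => coef (D mu)).
Proof.
have [[T [T_cont T_basis]] _] := control.
exact: (l1_cont_linear_basis_bound absK0 absK_ge0 absKM absK_emb (omega_gt0 omega_growth)
  T_cont T_basis).
Qed.

Lemma antipode_bounded : l1_basis_bounded absK omega msz msz (fun mu => coef (S mu)).
Proof.
have [_ [T [T_cont T_basis]]] := control.
exact: (l1_cont_linear_basis_bound absK0 absK_ge0 absKM absK_emb (omega_gt0 omega_growth)
  T_cont T_basis).
Qed.

Lemma Gctr_inverse phi : Gctr phi ->
  [/\ Gctr (compS S phi), conv phi (compS S phi) = cunit & conv (compS S phi) phi = cunit].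
Proof.
have [[D_mul D_one] D_coassoc [[eps_mul eps_one] D_counit] S_antipode _] := hopf.
have S_bd := antipode_bounded.
move=> [phi_linf phi_char]; split; [split | exact: conv_compSr | exact: conv_compSl].
  exact: (linf_compS (absK := absK)).
exact: compS_char.
Qed.

Lemma Gctr_units : Gctr `<=` linf_units msz nB omega D eps.
Proof.
move=> phi phi_G; have [[Sphi_linf _] phi_Sphi Sphi_phi] := Gctr_inverse phi_G.
by split; [case: phi_G | exists (compS S phi)].
Qed.

Lemma lemma3p10_conclusion_holds :
  lemma3p10_conclusion absK mmul mone msz nB omega D eps S.
Proof.
have [[D_mul D_one] D_coassoc [[eps_mul eps_one] D_counit] _ [_ eps_graded msz_connected]] :=
  hopf.
have D_bd := coprod_bounded.
split; split.
- split=> [phi _|]; first by split; [exact: conv_cunitl | exact: conv_cunitr].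
  split; last exact: cunit_char.
  exact: (linf_cunit absK0 absK1 nB_banach omega_growth eps_graded msz_connected eps_one).
- exact: Gctr_units.
- move=> phi psi [phi_linf phi_char] [psi_linf psi_char].
  by split; [exact: (linf_conv (absK := absK)) | exact: conv_char].
- exact: Gctr_inverse.
- exists Gctr; split; first exact: Gctr_closed.
  by apply/seteqP; split=> [phi phi_G|phi []//]; split=> //; exact: Gctr_units.
- split; first exact: (linf0 (absK := absK)).
  by apply/is_inf_characterP => x y; rewrite !scaler0 addr0.
- move=> a phi psi [phi_linf phi_inf] [psi_linf psi_inf].
  split; last exact: is_inf_character_scale_add.
  exact: (linf_scale_add (absK := absK)).
- move=> phi psi [phi_linf phi_inf] [psi_linf psi_inf].
  split; last exact: conv_commutator_inf.
  by apply: (linfB (absK := absK)) => //; exact: (linf_conv (absK := absK)).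
- exact: gctr_closed.
Qed.

End Lemma3p10.

Lemma lemma3p10_stmt_abs (R : realType) (K : fieldType) (absK : K -> R) (emb : R -> K) :
  absK 0 = 0 -> (forall x, 0 <= absK x) -> {morph absK : x y / x * y} ->
  absK 1 = 1 -> absK (-1) = 1 -> (forall r, 0 <= r -> absK (emb r) = r) ->
  forall (M : choiceType) (mmul : M -> M -> M) (mone : M) (msz : M -> nat),
  lemma3p10_stmt absK mmul mone msz.
Proof.
move=> absK0 absK_ge0 absKM absK1 absKN1 absK_emb M mmul mone msz.
move=> B nB omega D eps S nB_banach [omega_growth _] hopf control.
exact: (lemma3p10_conclusion_holds absK0 absK_ge0 absK1 absKN1 absKM absK_emb
  nB_banach omega_growth hopf control).
Qed.

Lemma lemma3p10_stmt_real (R : realType) (M : choiceType) (mmul : M -> M -> M) (mone : M)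
    (msz : M -> nat) :
  lemma3p10_stmt (fun x : R => `|x|) mmul mone msz.
Proof.
apply: (@lemma3p10_stmt_abs R R (fun x : R => `|x|) id).
- exact: normr0.
- by move=> x; exact: normr_ge0.
- by move=> x y; exact: normrM.
- exact: normr1.
- exact: normrN1.
- by move=> r /ger0_norm.
Qed.

Lemma lemma3p10_stmt_complex (R : realType) (M : choiceType) (mmul : M -> M -> M) (mone : M)
    (msz : M -> nat) :
  lemma3p10_stmt (@cabs R) mmul mone msz.
Proof.
apply: (@lemma3p10_stmt_abs R R[i] (@cabs R) (fun r => r%:C)%C).
- exact: ComplexField.Normc.normc0.
- by case=> a b; rewrite /cabs /= sqrtr_ge0.
- exact: ComplexField.Normc.normcM.
- exact: ComplexField.Normc.normc1.
- by rewrite /cabs /= sqrrN expr1n oppr0 expr0n addr0 sqrtr1.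
- by move=> r r_ge0; rewrite /cabs /= expr0n addr0 sqrtr_sqr ger0_norm.
Qed.

Unset Implicit Arguments.
Set Strict Implicit.

Theorem lemma3p10 (R : realType) (Sig : choiceType) (deg : Sig -> nat) :
  [/\ lemma3p10_stmt (fun x : R => `|x|) (@cat Sig) [::] (wdeg deg),
      lemma3p10_stmt (fun x : R => `|x|) (@msetD Sig) mset0 (msdeg deg),
      lemma3p10_stmt (@cabs R) (@cat Sig) [::] (wdeg deg) &
      lemma3p10_stmt (@cabs R) (@msetD Sig) mset0 (msdeg deg)].
Proof.
split; [exact: lemma3p10_stmt_real | exact: lemma3p10_stmt_real |
        exact: lemma3p10_stmt_complex | exact: lemma3p10_stmt_complex].
Qed.
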